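(* Let $c\ge2$, let $\Gamma=(V,E)$ be a $c$-uniform unoriented hypergraph with no isolated vertices, let $k\ge2$ and let $V_1,\dots,V_k$ be the color classes of a proper strong $k$-coloring of $\Gamma$. Then the functions $g_{ij}$ (for all distinct $i,j$) are eigenfunctions of the normalized Laplacian $L$ if and only if for all $i=1,\dots,k$ and all $v\in V$, \[ \bigl|\{e\in E: v\in e,\ e\cap V_i\neq\varnothing\}\bigr|=\begin{cases}\dfrac{(c-1)\deg v}{k-1}, & v\notin V_i,\\[2mm] \deg v, & v\in V_i.\end{cases} \] In this case the corresponding eigenvalue is $\dfrac{k-c}{k-1}$.
   Context: A hypergraph has finite vertex set $V$ and edge set $E\subseteq\mathcal P(V)$; it is $c$-uniform if $|e|=c$ for all $e$, and unoriented means all incidences have orientation $+1$. $\deg v=|\{e\in E: v\in e\}|\ge1$, $D=\mathrm{diag}(\deg v)$, adjacency $A_{v,v}=0$ and $A_{v,w}=-|\{e\in E: v,w\in e\}|$ for $v\ne w$, normalized Laplacian $L=\mathrm{Id}-D^{-1}A$. A proper strong $k$-coloring is a map $V\to\{1,\dots,k\}$ such that any two distinct vertices in a common edge receive different colors. For color classes $V_1,\dots,V_k$ and distinct $i,j$, $g_{ij}(w)=1$ if $w\in V_i$, $-1$ if $w\in V_j$, $0$ otherwise. *)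

From mathcomp Require Import all_boot all_order all_algebra.
From mathcomp Require Import reals.
Set Implicit Arguments. Unset Strict Implicit. Unset Printing Implicit Defensive.
Import Order.TTheory GRing.Theory Num.Theory.
Local Open Scope ring_scope.

Definition c_uniform (V : finType) (E : {set {set V}}) (c : nat) : Prop :=
  forall e, e \in E -> #|e| = c.

Definition hdeg (V : finType) (E : {set {set V}}) (v : V) : nat :=
  #|[set e in E | v \in e]|.

Definition no_isolated (V : finType) (E : {set {set V}}) : Prop :=
  forall v, (1 <= hdeg E v)%N.

Definition hadj (R : ringType) (V : finType) (E : {set {set V}}) (v w : V) : R :=
  if v == w then 0 else - (#|[set e in E | (v \in e) && (w \in e)]|%:R).

Definition hlap (R : fieldType) (V : finType) (E : {set {set V}}) (f : V -> R) (v : V) : R :=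
  f v - (hdeg E v)%:R^-1 * \sum_(w : V) hadj R E v w * f w.

Definition eigenfunction (R : fieldType) (V : finType) (E : {set {set V}}) (f : V -> R) : Prop :=
  (exists v, f v != 0) /\ exists lambda : R, forall v, hlap E f v = lambda * f v.

Definition proper_strong_coloring (V : finType) (E : {set {set V}}) (k : nat)
  (col : V -> 'I_k) : Prop :=
  forall e v w, e \in E -> v \in e -> w \in e -> v != w -> col v != col w.

Definition color_class (V : finType) (k : nat) (col : V -> 'I_k) (i : 'I_k) : {set V} :=
  [set v | col v == i].

Definition gfun (R : ringType) (V : finType) (k : nat) (col : V -> 'I_k) (i j : 'I_k) (w : V) : R :=
  if w \in color_class col i then 1 else if w \in color_class col j then -1 else 0.

Definition meet_count (V : finType) (E : {set {set V}}) (k : nat) (col : V -> 'I_k)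
  (i : 'I_k) (v : V) : nat :=
  #|[set e in E | (v \in e) && (e :&: color_class col i != set0)]|.

From mathcomp Require Import all_boot all_order all_algebra.
From mathcomp Require Import reals ring.
Import Order.TTheory GRing.Theory Num.Theory.
Set Implicit Arguments. Unset Strict Implicit. Unset Printing Implicit Defensive.
Local Open Scope ring_scope.

(* A proper strong coloring puts the vertices of each edge in distinct classes,
   so an edge meets a class in at most one vertex.  Hence, for v outside V_i,
   the adjacency mass of v towards V_i is exactly the number m_i(v) of edges at
   v meeting V_i, and (D^-1 A g_ij)(v) = (m_j(v) - m_i(v)) / deg v whenever v
   lies in neither V_i nor V_j.  If all g_ij are eigenfunctions this forces
   m_i(v) to be the same for every class i not containing v; since v's own
   class is met by all deg v edges at v and each edge meets exactly c classes,
   deg v + (k - 1) m_i(v) = c deg v.  Conversely these counts make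
   L g_ij = (k - c)/(k - 1) g_ij by a direct computation. *)

Lemma natr_sub1_neq0 (R : numDomainType) n : (1 < n)%N -> n%:R - 1 != 0 :> R.
Proof. by move=> n_gt1; rewrite subr_eq0 pnatr_eq1 neq_ltn n_gt1 orbT. Qed.

Section ColoredHypergraph.

Variables (V : finType) (E : {set {set V}}) (k : nat) (col : V -> 'I_k).

Lemma meet_countE i v :
  meet_count E col i v =
  (\sum_(e in E | v \in e) (e :&: color_class col i != set0))%N.
Proof.
rewrite /meet_count -sum1_card [RHS]big_mkcond [LHS]big_mkcond /=.
by apply: eq_bigr => e _; rewrite !inE; case: (e \in E) (v \in e) => [] [].
Qed.

Lemma meet_count_own_class i v :
  v \in color_class col i -> meet_count E col i v = hdeg E v.
Proof.
move=> vVi; apply: eq_card => e; rewrite !inE.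
by case: (e \in E); case ve: (v \in e) => //=; apply/set0Pn; exists v; rewrite inE ve.
Qed.

Lemma sum_card_common_edges i v :
  (\sum_(w in color_class col i) #|[set e in E | (v \in e) && (w \in e)]| =
   \sum_(e in E | v \in e) #|e :&: color_class col i|)%N.
Proof.
under eq_bigr do rewrite -sum1_card.
rewrite (exchange_big_dep (fun e => (e \in E) && (v \in e))) /=; last first.
  by move=> w e _; rewrite inE => /and3P[-> ->].
apply: eq_bigr => e /andP[eE ve]; rewrite -sum1_card.
by apply: eq_bigl => w; rewrite !inE eE ve andbC.
Qed.

Lemma natr_hdeg_neq0 (R : numDomainType) v :
  no_isolated E -> (hdeg E v)%:R != 0 :> R.
Proof. by move=> noiso; rewrite pnatr_eq0 -lt0n noiso. Qed.

Hypothesis proper : proper_strong_coloring E col.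

Lemma card_edge_meet_class e i : e \in E ->
  #|e :&: color_class col i| = (e :&: color_class col i != set0).
Proof.
move=> eE; have : (#|e :&: color_class col i| <= 1)%N.
  apply/card_le1_eqP => x y; rewrite !inE => /andP[xe /eqP cx] /andP[ye /eqP cy].
  apply/eqP/negPn/negP => xy.
  by have := proper eE ye xe xy; rewrite cx cy eqxx.
by rewrite -cards_eq0; case: #|_| => [|[|]].
Qed.

Lemma sum_hadj_color_class (R : nzRingType) i v :
  \sum_(w in color_class col i) hadj R E v w =
  (if v \in color_class col i then 0 else - (meet_count E col i v)%:R).
Proof.
case: ifP => vVi.
  apply: big1 => w wVi; rewrite /hadj; case: eqP => // /eqP vw.
  suff -> : [set e in E | (v \in e) && (w \in e)] = set0 by rewrite cards0 oppr0.
  apply/setP => e; rewrite !inE; apply/negP => /and3P[eE ve we].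
  by have := proper eE ve we vw; rewrite !inE in vVi wVi; rewrite (eqP wVi) vVi.
rewrite meet_countE (eq_bigr (fun e => #|e :&: color_class col i|)); last first.
  by move=> e /andP[eE _]; rewrite card_edge_meet_class.
rewrite -sum_card_common_edges natr_sum -sumrN; apply: eq_bigr => w wVi.
by rewrite /hadj; case: eqP => // vw; rewrite vw wVi in vVi.
Qed.

Lemma sum_meet_count c v : c_uniform E c ->
  (\sum_j meet_count E col j v = c * hdeg E v)%N.
Proof.
move=> unif; under eq_bigr do rewrite meet_countE.
rewrite exchange_big /= /hdeg -sum1_card big_distrr /= [RHS]big_mkcond.
rewrite [LHS]big_mkcond; apply: eq_bigr => e _; rewrite inE.
case: ifP => [/andP[eE _]|//]; rewrite muln1 -(unif e eE).
under eq_bigr do rewrite -(card_edge_meet_class _ eE) -sum1_card.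
rewrite -sum1_card (partition_big col predT) //=.
by apply: eq_bigr => j _; apply: eq_bigl => x; rewrite !inE.
Qed.

Lemma gfunE (R : nzRingType) i j w : i != j ->
  gfun R col i j w = (w \in color_class col i)%:R - (w \in color_class col j)%:R.
Proof.
move=> ij; rewrite /gfun !inE; case: (eqVneq (col w) i) => [->|_].
  by rewrite (negbTE ij) subr0.
by case: (col w == j); rewrite /= ?subrr ?sub0r.
Qed.

Lemma hlap_gfun (R : fieldType) i j v : i != j ->
  hlap E (gfun R col i j) v = gfun R col i j v + (hdeg E v)%:R^-1 *
    ((if v \in color_class col i then 0 else (meet_count E col i v)%:R) -
     (if v \in color_class col j then 0 else (meet_count E col j v)%:R)).
Proof.
move=> ij; rewrite /hlap (eq_bigr _ (fun w _ => congr1 _ (gfunE R w ij))).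
under eq_bigr do rewrite mulrBr !mulr_natr !mulrb.
rewrite sumrB -!big_mkcond !sum_hadj_color_class.
by case: ifP; case: ifP => _ _; ring.
Qed.

Lemma eigenfunction_meet_count_eq (R : numFieldType) i j v :
  no_isolated E -> i != j -> eigenfunction E (gfun R col i j) ->
  v \notin color_class col i -> v \notin color_class col j ->
  meet_count E col i v = meet_count E col j v.
Proof.
move=> noiso ij [_ [lam /(_ v) eig]] /negbTE vi /negbTE vj.
move: eig; rewrite hlap_gfun // gfunE // vi vj subrr mulr0 add0r => /eqP.
by rewrite mulf_eq0 invr_eq0 (negbTE (natr_hdeg_neq0 R v noiso)) subr_eq0 eqr_nat => /eqP.
Qed.

Lemma meet_count_off_class c v m : c_uniform E c ->
  (forall j, v \notin color_class col j -> meet_count E col j v = m) ->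
  (m * k.-1 + hdeg E v = c * hdeg E v)%N.
Proof.
move=> unif off; rewrite -(sum_meet_count v unif) (bigD1 (col v)) //=.
rewrite meet_count_own_class ?inE // addnC; congr (_ + _)%N.
rewrite (eq_bigr (fun=> m)) => [|j]; last by move=> jv; apply: off; rewrite inE eq_sym.
by rewrite sum_nat_const cardC1 card_ord mulnC.
Qed.

Definition meet_count_regular (R : numFieldType) (c : nat) : Prop :=
  forall i v, (meet_count E col i v)%:R =
    (if v \in color_class col i then (hdeg E v)%:R
     else (c%:R - 1) * (hdeg E v)%:R / (k%:R - 1) : R).

Lemma eigenfunctions_meet_count_regular (R : numFieldType) c :
  c_uniform E c -> no_isolated E -> (1 < k)%N ->
  (forall i j, i != j -> eigenfunction E (gfun R col i j)) ->
  meet_count_regular R c.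
Proof.
move=> unif noiso k_gt1 eig i v; case: ifP => vVi.
  by rewrite meet_count_own_class.
have off j : v \notin color_class col j -> meet_count E col j v = meet_count E col i v.
  case: (eqVneq j i) => [-> //|ji vj].
  exact: eigenfunction_meet_count_eq noiso ji (eig _ _ ji) vj (negbT vVi).
have /(congr1 (GRing.natmul (1 : R))) := meet_count_off_class unif off.
rewrite natrD !natrM -subn1 natrB ?(ltnW k_gt1) // => count_eq.
rewrite -(mulfK (natr_sub1_neq0 R k_gt1) (meet_count _ _ _ _)%:R); congr (_ / _).
by rewrite mulrBl mul1r -count_eq addrK.
Qed.

Lemma meet_count_regular_hlap_gfun (R : numFieldType) c i j v :
  no_isolated E -> (1 < k)%N -> meet_count_regular R c -> i != j ->
  hlap E (gfun R col i j) v = (k%:R - c%:R) / (k%:R - 1) * gfun R col i j v.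
Proof.
move=> noiso k_gt1 reg ij.
rewrite hlap_gfun // gfunE //; move: (reg i v) (reg j v).
case: ifP => vi; case: ifP => vj /=.
- by move: vi vj ij; rewrite !inE => /eqP-> /eqP->; rewrite eqxx.
all: move=> mi mj; rewrite ?mi ?mj; field.
all: by rewrite ?natr_hdeg_neq0 ?natr_sub1_neq0.
Qed.

Lemma meet_count_regular_color_class_neq0 (R : numFieldType) c i :
  (0 < #|V|)%N -> (1 < c)%N -> no_isolated E -> (1 < k)%N ->
  meet_count_regular R c -> color_class col i != set0.
Proof.
move=> /card_gt0P[v _] c_gt1 noiso k_gt1 reg; apply/negP => /eqP Vi0.
have := reg i v; rewrite meet_countE Vi0 in_set0 big1 => [|e _]; last first.
  by rewrite setI0 eqxx.
move/esym/eqP; rewrite !mulf_eq0 invr_eq0 (negbTE (natr_hdeg_neq0 R v noiso)).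
by rewrite !(negbTE (natr_sub1_neq0 R _)).
Qed.

Lemma meet_count_regular_eigenfunction (R : numFieldType) c i j :
  (0 < #|V|)%N -> (1 < c)%N -> no_isolated E -> (1 < k)%N ->
  meet_count_regular R c -> i != j -> eigenfunction E (gfun R col i j).
Proof.
move=> V_gt0 c_gt1 noiso k_gt1 reg ij; split.
  have /set0Pn[w wVi] :=
    meet_count_regular_color_class_neq0 i V_gt0 c_gt1 noiso k_gt1 reg.
  have wVj : w \notin color_class col j by move: wVi; rewrite !inE => /eqP->.
  by exists w; rewrite gfunE // wVi (negbTE wVj) subr0 oner_neq0.
exists ((k%:R - c%:R) / (k%:R - 1)) => v.
exact: meet_count_regular_hlap_gfun.
Qed.

End ColoredHypergraph.

Theorem mainTheorem9 (R : realType) (V : finType) (E : {set {set V}}) (c k : nat)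
  (col : V -> 'I_k) :
  (0 < #|V|)%N -> (2 <= c)%N -> c_uniform E c -> no_isolated E -> (2 <= k)%N ->
  proper_strong_coloring E col ->
  ((forall i j : 'I_k, i != j -> eigenfunction E (gfun R col i j)) <->
   (forall (i : 'I_k) (v : V),
       (meet_count E col i v)%:R =
       (if v \in color_class col i then (hdeg E v)%:R
        else ((c%:R - 1) * (hdeg E v)%:R / (k%:R - 1) : R))))
  /\
  ((forall (i : 'I_k) (v : V),
       (meet_count E col i v)%:R =
       (if v \in color_class col i then (hdeg E v)%:R
        else ((c%:R - 1) * (hdeg E v)%:R / (k%:R - 1) : R))) ->
   forall i j : 'I_k, i != j -> forall v : V,
     hlap E (gfun R col i j) v = ((k%:R - c%:R) / (k%:R - 1)) * gfun R col i j v).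
Proof.
move=> V_gt0 c_gt1 unif noiso k_gt1 proper; split.
  split; first exact: eigenfunctions_meet_count_regular.
  move=> reg i j.
  exact: (meet_count_regular_eigenfunction proper V_gt0 c_gt1 noiso k_gt1 reg).
move=> reg i j ij v.
exact: (meet_count_regular_hlap_gfun proper v noiso k_gt1 reg ij).
Qed.
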